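(* Let $\mathcal{H},\mathcal{K}$ be real or complex Hilbert spaces and let $S:\mathcal{H}\to\mathcal{K}$ and $T:\mathcal{K}\to\mathcal{H}$ be (not necessarily densely defined) surjective linear operators such that $$\langle Sx,y\rangle=\langle x,Ty\rangle\qquad \text{for all } x\in\operatorname{dom} S,\ y\in\operatorname{dom} T.$$ Then $S$ and $T$ are both densely defined operators such that $S^*=T$ and $T^*=S$.
   Context: Linear operators are defined on linear subspaces $\operatorname{dom}$ of the respective space; surjective means the range is the whole target space. *)

From HB Require Import structures.
From mathcomp Require Import all_boot all_order all_algebra complex.
From mathcomp Require Import reals.
Set Implicit Arguments. Unset Strict Implicit. Unset Printing Implicit Defensive.
Import Order.TTheory GRing.Theory Num.Theory.
Local Open Scope ring_scope.

Definition scal (R : realType) (is_complex : bool) : numFieldType :=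
  if is_complex return numFieldType then (R[i] : numClosedFieldType) else (R : numFieldType).

Definition sconj (R : realType) (b : bool) : scal R b -> scal R b :=
  match b return scal R b -> scal R b with
  | true => fun z : R[i] => conjc z
  | false => fun x : R => x
  end.

Definition inner_product (R : realType) (b : bool) (V : lmodType (scal R b))
    (ip : V -> V -> scal R b) : Prop :=
  [/\ (forall (a : scal R b) (x y z : V), ip (a *: x + y) z = a * ip x z + ip y z),
      (forall x y : V, ip x y = sconj (ip y x)),
      (forall x : V, 0 <= ip x x) &
      (forall x : V, ip x x = 0 -> x = 0)].

(* Completeness w.r.t. the norm ||x|| = sqrt <x,x> (we compare <x,x> with
   positive scalars, which is equivalent to comparing norms). *)
Definition ip_complete (R : realType) (b : bool) (V : lmodType (scal R b))
    (ip : V -> V -> scal R b) : Prop :=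
  forall u : nat -> V,
    (forall e : scal R b, 0 < e -> exists N : nat, forall m n : nat,
        (N <= m)%N -> (N <= n)%N -> ip (u m - u n) (u m - u n) < e) ->
    exists l : V, forall e : scal R b, 0 < e -> exists N : nat, forall n : nat,
        (N <= n)%N -> ip (u n - l) (u n - l) < e.

Definition hilbert (R : realType) (b : bool) (V : lmodType (scal R b))
    (ip : V -> V -> scal R b) : Prop :=
  inner_product ip /\ ip_complete ip.

(* A linear operator from V to W: a domain D (a linear subspace of V) and a map
   f, linear on D (values of f outside D are irrelevant). *)
Definition linear_operator (K : numFieldType) (V W : lmodType K)
    (D : V -> Prop) (f : V -> W) : Prop :=
  [/\ D 0,
      (forall (a : K) (x y : V), D x -> D y -> D (a *: x + y)) &
      (forall (a : K) (x y : V), D x -> D y -> f (a *: x + y) = a *: f x + f y)].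

Definition op_surjective (K : numFieldType) (V W : lmodType K)
    (D : V -> Prop) (f : V -> W) : Prop :=
  forall w : W, exists2 x, D x & f x = w.

Definition densely_defined (K : numFieldType) (V : lmodType K)
    (ip : V -> V -> K) (D : V -> Prop) : Prop :=
  forall (x : V) (e : K), 0 < e -> exists2 d, D d & ip (x - d) (x - d) < e.

(* The graph of the adjoint S^* : W -> V of (DS, S) : V -> W:
   (y, z) is in the graph iff <S x, y> = <x, z> for all x in dom S. *)
Definition adjoint_graph (K : numFieldType) (V W : lmodType K)
    (ipV : V -> V -> K) (ipW : W -> W -> K)
    (DS : V -> Prop) (S : V -> W) (y : W) (z : V) : Prop :=
  forall x : V, DS x -> ipW (S x) y = ipV x z.

Definition is_adjoint (K : numFieldType) (V W : lmodType K)
    (ipV : V -> V -> K) (ipW : W -> W -> K)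
    (DS : V -> Prop) (S : V -> W) (DT : W -> Prop) (T : W -> V) : Prop :=
  forall (y : W) (z : V), adjoint_graph ipV ipW DS S y z <-> (DT y /\ T y = z).

(* If z is orthogonal to dom S, write z = T y; then <S x, y> = <x, z> = 0 for all
   x, so y is orthogonal to ran S = K and z = T 0 = 0.  In a Hilbert space a
   subspace D with trivial orthogonal complement is dense: for a minimizing
   sequence d_n of the distance from x to D, the vectors x - d_n form a Cauchy
   sequence by the parallelogram law, and their limit is orthogonal to D, hence 0.
   If <S x, y> = <x, z> for all x in dom S, write z = T y'; then y - y' is
   orthogonal to ran S = K, so (y, z) lies in the graph of T.  Conjugating the
   hypothesis exchanges the roles of S and T. *)

From HB Require Import structures.
From mathcomp Require Import all_boot all_order all_algebra complex.
From mathcomp Require Import classical_sets boolp reals.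
From mathcomp Require Import ring lra.
Set Implicit Arguments. Unset Strict Implicit. Unset Printing Implicit Defensive.
Import Order.TTheory GRing.Theory Num.Theory.
Local Open Scope ring_scope.

Lemma eventually_invS_lt (R : archiRealFieldType) (e : R) :
  0 < e -> exists N, forall n, (N <= n)%N -> n.+1%:R^-1 < e.
Proof.
move=> e_gt0; exists (Num.truncn e^-1) => n le_Nn.
rewrite invf_plt ?posrE ?ltr0Sn //; apply: (lt_le_trans (truncnS_gt _)).
by rewrite ler_nat ltnS.
Qed.

Lemma invS_gt0 (R : numFieldType) (n : nat) : 0 < n.+1%:R^-1 :> R.
Proof. by rewrite invr_gt0 ltr0Sn. Qed.

Lemma eq0_of_linear_le_quadratic (R : realFieldType) (q c : R) :
  0 <= q -> 0 <= c -> (forall s, 0 < s -> s * q <= s ^+ 2 * q * c) -> q = 0.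
Proof.
move=> q_ge0 c_ge0 le_qc; pose s := (c + 1)^-1.
have s_gt0 : 0 < s by rewrite invr_gt0; lra.
have sc_lt1 : s * c < 1 by rewrite mulrC ltr_pdivrMr ?mul1r; lra.
have pos : 0 < s * (1 - s * c) by apply: mulr_gt0; lra.
have := le_qc s s_gt0; nra.
Qed.

Lemma sconj_is_zmod_morphism (R : realType) (b : bool) : zmod_morphism (@sconj R b).
Proof. by case: b => x y /=; rewrite ?rmorphB. Qed.

HB.instance Definition _ (R : realType) (b : bool) :=
  GRing.isZmodMorphism.Build _ _ (@sconj R b) (@sconj_is_zmod_morphism R b).

Lemma sconj_is_monoid_morphism (R : realType) (b : bool) : monoid_morphism (@sconj R b).
Proof.
by case: b; split=> //; [exact: (rmorph1 (@conjc R)) | exact: (rmorphM (@conjc R))].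
Qed.

HB.instance Definition _ (R : realType) (b : bool) :=
  GRing.isMonoidMorphism.Build _ _ (@sconj R b) (@sconj_is_monoid_morphism R b).

Section Scalars.
Variable R : realType.

Definition of_real (b : bool) : {rmorphism R -> scal R b} :=
  match b return {rmorphism R -> scal R b} with
  | true => real_complex R
  | false => idfun
  end.

Definition re {b : bool} : scal R b -> R :=
  match b return scal R b -> R with
  | true => @complex.Re R
  | false => id
  end.

Definition abs2 {b : bool} (a : scal R b) : R := re (a * sconj a).

Variable b : bool.

Lemma ler_of_real (x y : R) : (of_real b x <= of_real b y) = (x <= y).
Proof. by case: b => //; exact: lecR. Qed.

Lemma ltr_of_real (x y : R) : (of_real b x < of_real b y) = (x < y).
Proof. by case: b => //; exact: ltcR. Qed.

Lemma of_real_re (a : scal R b) : 0 <= a -> of_real b (re a) = a.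
Proof. by case: b a => //= -[x y]; rewrite lecE /= => /andP[/eqP-> _]. Qed.

Lemma re_gt0 (a : scal R b) : 0 < a -> 0 < re a.
Proof. by move=> a_gt0; rewrite -ltr_of_real of_real_re ?ltW // rmorph0. Qed.

Lemma sconjK : involutive (@sconj R b).
Proof. by case: b => // z; exact: conjcK. Qed.

Lemma sconj_of_real (r : R) : sconj (of_real b r) = of_real b r.
Proof. by case: b => //; exact: conjc_real. Qed.

Lemma mul_sconj_ge0 (a : scal R b) : 0 <= a * sconj a.
Proof.
case: b a => [[x y]|a] /=; last by rewrite -expr2 sqr_ge0.
by simpc; rewrite mulrC addNr eqxx addr_ge0 // -expr2 sqr_ge0.
Qed.

Lemma of_real_abs2 (a : scal R b) : of_real b (abs2 a) = a * sconj a.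
Proof. exact/of_real_re/mul_sconj_ge0. Qed.

Lemma abs2_ge0 (a : scal R b) : 0 <= abs2 a.
Proof. by rewrite -ler_of_real of_real_abs2 rmorph0 mul_sconj_ge0. Qed.

Lemma abs2_eq0 (a : scal R b) : abs2 a = 0 -> a = 0.
Proof.
move=> /(congr1 (of_real b)); rewrite of_real_abs2 rmorph0 => /eqP.
by case: b a => /= a; rewrite mulf_eq0 ?conjc_eq0 orbb => /eqP.
Qed.

End Scalars.

Arguments of_real {R} b.

Section InnerProduct.
Variables (R : realType) (b : bool) (V : lmodType (scal R b)).
Variable ip : V -> V -> scal R b.

Definition sqnorm (v : V) : R := re (ip v v).

Hypothesis hip : inner_product ip.

Lemma ipC x y : ip x y = sconj (ip y x).
Proof. by case: hip => _ + _ _; apply. Qed.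

Lemma ipDl x y z : ip (x + y) z = ip x z + ip y z.
Proof. by case: hip => ipl _ _ _; rewrite -{1}[x]scale1r ipl mul1r. Qed.

Lemma ip0l z : ip 0 z = 0.
Proof. by apply/(addrI (ip 0 z)); rewrite -ipDl !addr0. Qed.

Lemma ipZl a x z : ip (a *: x) z = a * ip x z.
Proof. by case: hip => ipl _ _ _; rewrite -[a *: x]addr0 ipl ip0l addr0. Qed.

Lemma ipBl x y z : ip (x - y) z = ip x z - ip y z.
Proof. by rewrite ipDl -scaleN1r ipZl mulN1r. Qed.

Lemma ipDr x y z : ip z (x + y) = ip z x + ip z y.
Proof. by rewrite ipC ipDl rmorphD /= -!ipC. Qed.

Lemma ipZr a x z : ip z (a *: x) = sconj a * ip z x.
Proof. by rewrite ipC ipZl rmorphM /= -ipC. Qed.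

Lemma ipBr x y z : ip z (x - y) = ip z x - ip z y.
Proof. by rewrite ipC ipBl rmorphB /= -!ipC. Qed.

Lemma ip0r z : ip z 0 = 0.
Proof. by rewrite ipC ip0l rmorph0. Qed.

Lemma ip_ge0 x : 0 <= ip x x.
Proof. by case: hip => _ _ + _; apply. Qed.

Lemma ip_eq0 x : ip x x = 0 -> x = 0.
Proof. by case: hip => _ _ _; apply. Qed.

Lemma ip_injr y z : (forall x, ip x y = ip x z) -> y = z.
Proof. by move=> eq_ip; apply/subr0_eq/ip_eq0; rewrite ipBr eq_ip subrr. Qed.

Lemma ip_addZ_expand w t d : ip (w + t *: d) (w + t *: d) =
  ip w w + (t * ip d w + sconj (t * ip d w)) + t * sconj t * ip d d.
Proof. by rewrite !(ipDl, ipDr, ipZl, ipZr) rmorphM [ip w d]ipC; ring. Qed.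

Lemma of_real_sqnorm v : of_real b (sqnorm v) = ip v v.
Proof. exact/of_real_re/ip_ge0. Qed.

Lemma sqnorm_ge0 v : 0 <= sqnorm v.
Proof. by rewrite -(ler_of_real b) of_real_sqnorm rmorph0 ip_ge0. Qed.

Lemma sqnorm_midpoint u v :
  sqnorm (u - v) + 4 * sqnorm (2^-1 *: (u + v)) = 2 * sqnorm u + 2 * sqnorm v.
Proof.
apply: (fmorph_inj (of_real b)).
rewrite !(rmorphD, rmorphM, rmorph_nat) !of_real_sqnorm ipZl ipZr fmorphV rmorph_nat.
by rewrite !(ipDl, ipDr, ipBl, ipBr); field.
Qed.

End InnerProduct.

Section Projection.
Variables (R : realType) (b : bool) (V : lmodType (scal R b)).
Variable ip : V -> V -> scal R b.
Hypotheses (hip : inner_product ip) (hc : ip_complete ip).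
Variable D : V -> Prop.
Hypotheses (D0 : D 0) (DC : forall a x y, D x -> D y -> D (a *: x + y)).
Variable x : V.

Let sqdist := inf [set sqnorm ip (x - d) | d in D].

Let has_inf_sqdist : has_inf [set sqnorm ip (x - d) | d in D].
Proof.
split; first by exists (sqnorm ip (x - 0)), 0.
by exists 0 => _ [d _ <-]; exact: sqnorm_ge0.
Qed.

Let sqdist_le d : D d -> sqdist <= sqnorm ip (x - d).
Proof. by move=> Dd; apply: (ge_inf has_inf_sqdist.2); exists d. Qed.

Let near_sqdist e : 0 < e -> exists2 d, D d & sqnorm ip (x - d) < sqdist + e.
Proof. by move=> e_gt0; have [_ [d Dd <-]] := inf_adherent e_gt0 has_inf_sqdist; exists d. Qed.

Lemma near_minimizers_close d1 d2 a c : D d1 -> D d2 ->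
  sqnorm ip (x - d1) < sqdist + a -> sqnorm ip (x - d2) < sqdist + c ->
  sqnorm ip ((x - d1) - (x - d2)) < 2 * a + 2 * c.
Proof.
move=> Dd1 Dd2 near1 near2.
have mid_eq : 2^-1 *: ((x - d1) + (x - d2)) = x - (2^-1 *: (d1 + d2)).
  rewrite addrACA -opprD scalerBr -mulr2n -scaler_nat scalerA mulVf ?scale1r //.
  by rewrite pnatr_eq0.
have := sqnorm_midpoint hip (x - d1) (x - d2); rewrite mid_eq.
have := sqdist_le (DC 2^-1 (DC 1 Dd1 Dd2) D0); rewrite scale1r addr0; lra.
Qed.

Lemma sqdist_le_perturbed d d0 v s : D d -> D d0 ->
  sqdist <= sqnorm ip (x - d) + sqnorm ip (x - d - v)
            - 2 * s * abs2 (ip d0 v) + 2 * s ^+ 2 * abs2 (ip d0 v) * sqnorm ip d0.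
Proof.
(* Compare x - d + t d0 with sqdist and x - d - v - t d0 with 0: in the sum the
   cross terms against <d0, x - d - v> cancel, leaving those against g. *)
move=> Dd Dd0; set g := ip d0 v; pose t := - (of_real b s * sconj g).
have le_sqdist : of_real b sqdist <= ip (x - d + t *: d0) (x - d + t *: d0).
  rewrite -of_real_sqnorm // ler_of_real.
  have -> : x - d + t *: d0 = x - ((- t) *: d0 + d).
    by rewrite scaleNr opprD opprK addrA addrAC.
  exact/sqdist_le/DC.
have := ip_ge0 hip (x - d - v + (- t) *: d0).
rewrite !ip_addZ_expand // in le_sqdist * => ge0.
have split_ip : ip d0 (x - d) = ip d0 (x - d - v) + g by rewrite -ipDr // subrK.
rewrite -(ler_of_real b) -[of_real b sqdist]addr0.
apply: (le_trans (lerD le_sqdist ge0)); rewrite le_eqVlt; apply/orP; left; apply/eqP.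
rewrite !(rmorphD, rmorphM, rmorphN, rmorph_nat, rmorphXn) /= !of_real_sqnorm //.
rewrite of_real_abs2 split_ip /t !(rmorphN, rmorphM, rmorphD) /= sconj_of_real sconjK.
ring.
Qed.

Lemma exists_orthogonal_residual : exists2 l, (forall d0, D d0 -> ip d0 l = 0) &
  (forall e, 0 < e -> exists2 d, D d & sqnorm ip (x - d - l) < e).
Proof.
have /choice[dd ddP] : forall n, exists d,
    D d /\ sqnorm ip (x - d) < sqdist + n.+1%:R^-1.
  by move=> n; have [d Dd near_d] := near_sqdist (invS_gt0 _ n); exists d.
have [l ddl] : exists l, forall e, 0 < e -> exists N, forall n, (N <= n)%N ->
    ip (x - dd n - l) (x - dd n - l) < e.
  apply: hc => e e_gt0.
  have [N invN] : exists N, forall n, (N <= n)%N -> n.+1%:R^-1 < re e / 4.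
    by apply: eventually_invS_lt; rewrite divr_gt0 ?re_gt0.
  exists N => p q le_Np le_Nq.
  rewrite -(of_real_re (ltW e_gt0)) -of_real_sqnorm // ltr_of_real.
  have := near_minimizers_close (ddP p).1 (ddP q).1 (ddP p).2 (ddP q).2.
  have := invN p le_Np; have := invN q le_Nq.
  (* lra only succeeds once these inverses are generalized into atoms. *)
  by move: p.+1%:R^-1 q.+1%:R^-1 => a c; lra.
have conv e : 0 < e -> exists N, forall n, (N <= n)%N -> sqnorm ip (x - dd n - l) < e.
  move=> e_gt0; have [|N ddlN] := ddl (of_real b e).
    by rewrite -(rmorph0 (of_real b)) ltr_of_real.
  by exists N => n /ddlN; rewrite -of_real_sqnorm // ltr_of_real.
exists l => [d0 Dd0|e /conv[N ddlN]]; last by exists (dd N); [exact: (ddP N).1 | exact: ddlN].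
(* Let n grow in sqdist_le_perturbed with v := l. *)
apply/abs2_eq0/(eq0_of_linear_le_quadratic (abs2_ge0 _) (sqnorm_ge0 hip d0)).
move=> s s_gt0; apply/ler_addgt0Pr => e e_gt0.
have e2_gt0 : 0 < e / 2 by rewrite divr_gt0.
have [N1 invN1] := eventually_invS_lt e2_gt0.
have [N2 ddlN2] := conv _ e2_gt0.
pose n := maxn N1 N2.
have := sqdist_le_perturbed l s (ddP n).1 Dd0.
have := (ddP n).2; have := invN1 n (leq_maxl _ _); have := ddlN2 n (leq_maxr _ _).
by move: n.+1%:R^-1 => i; lra.
Qed.

End Projection.

Lemma dense_of_orthogonal_eq0 (R : realType) (b : bool) (V : lmodType (scal R b))
    (ip : V -> V -> scal R b) (D : V -> Prop) :
  inner_product ip -> ip_complete ip ->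
  D 0 -> (forall a x y, D x -> D y -> D (a *: x + y)) ->
  (forall z, (forall d, D d -> ip d z = 0) -> z = 0) -> densely_defined ip D.
Proof.
move=> hip hc D0 DC orth_eq0 x e e_gt0.
have [l /orth_eq0-> near_l] := exists_orthogonal_residual hip hc D0 DC x.
have [d Dd] := near_l _ (re_gt0 e_gt0).
by exists d; rewrite // -(of_real_re (ltW e_gt0)) -[x - d]subr0 -of_real_sqnorm // ltr_of_real.
Qed.

Lemma linear_operator0 (F : numFieldType) (V W : lmodType F) (D : V -> Prop) (f : V -> W) :
  linear_operator D f -> f 0 = 0.
Proof.
case=> D0 _ f_lin; have := f_lin 1 0 0 D0 D0.
by rewrite !scale1r addr0 => /esym/eqP; rewrite -subr_eq0 addrK => /eqP.
Qed.

Section SurjectivePair.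
Variables (R : realType) (b : bool) (H K : lmodType (scal R b)).
Variables (ipH : H -> H -> scal R b) (ipK : K -> K -> scal R b).
Hypotheses (hipH : inner_product ipH) (hipK : inner_product ipK).
Variables (DS : H -> Prop) (S : H -> K) (DT : K -> Prop) (T : K -> H).
Hypotheses (surjS : op_surjective DS S) (surjT : op_surjective DT T).
Hypothesis hST : forall x y, DS x -> DT y -> ipK (S x) y = ipH x (T y).

Lemma surjective_pair_sym y x : DT y -> DS x -> ipH (T y) x = ipK y (S x).
Proof. by move=> DTy DSx; rewrite ipC // -hST // -ipC. Qed.

Lemma orthogonal_dom_eq0 :
  T 0 = 0 -> forall z, (forall x, DS x -> ipH x z = 0) -> z = 0.
Proof.
move=> T0 z; have [y DTy <-] := surjT z => z_orth.
suff -> : y = 0 by [].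
apply: (ip_injr hipK) => w; have [x DSx <-] := surjS w.
by rewrite hST // z_orth // ip0r.
Qed.

Lemma is_adjoint_surjective_pair : is_adjoint ipH ipK DS S DT T.
Proof.
move=> y z; split=> [adj_yz | [DTy <-] x DSx]; last exact: hST.
have [y' DTy' Ty'] := surjT z; suff -> : y = y' by split.
apply: (ip_injr hipK) => w; have [x DSx <-] := surjS w.
by rewrite adj_yz // hST // Ty'.
Qed.

End SurjectivePair.

Theorem corollary3p5 (R : realType) (is_complex : bool)
    (H K : lmodType (scal R is_complex))
    (ipH : H -> H -> scal R is_complex) (ipK : K -> K -> scal R is_complex)
    (hH : hilbert ipH) (hK : hilbert ipK)
    (DS : H -> Prop) (S : H -> K) (DT : K -> Prop) (T : K -> H)
    (linS : linear_operator DS S) (linT : linear_operator DT T)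
    (surjS : op_surjective DS S) (surjT : op_surjective DT T)
    (hST : forall (x : H) (y : K), DS x -> DT y -> ipK (S x) y = ipH x (T y)) :
  [/\ densely_defined ipH DS, densely_defined ipK DT,
      is_adjoint ipH ipK DS S DT T & is_adjoint ipK ipH DT T DS S].
Proof.
have [[hipH hcH] [hipK hcK]] := (hH, hK).
have hTS := surjective_pair_sym hipH hipK hST.
have [[DS0 DSC _] [DT0 DTC _]] := (linS, linT).
split.
- apply: (dense_of_orthogonal_eq0 hipH hcH DS0 DSC).
  exact: (orthogonal_dom_eq0 hipK surjS surjT hST (linear_operator0 linT)).
- apply: (dense_of_orthogonal_eq0 hipK hcK DT0 DTC).
  exact: (orthogonal_dom_eq0 hipH surjT surjS hTS (linear_operator0 linS)).
- exact: (is_adjoint_surjective_pair hipK surjS surjT hST).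
- exact: (is_adjoint_surjective_pair hipH surjT surjS hTS).
Qed.
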